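(* For every integer $r \ge 2$, $\mathrm{gp_e}(Q_r) = 2^r$.
   Context: $Q_r$ is the $r$-dimensional hypercube: vertex set $\{0,1\}^r$, two vertices adjacent iff they differ in exactly one coordinate. A set $S$ of edges of a graph $G$ is an edge general position set if no geodesic (shortest path) of $G$ contains three edges of $S$; $\mathrm{gp_e}(G)$ is the maximum cardinality of an edge general position set of $G$. *)

From mathcomp Require Import all_boot.
From mathcomp Require Import boolp.
Set Implicit Arguments. Unset Strict Implicit. Unset Printing Implicit Defensive.

(* A simple graph is given by a finite vertex type T and an adjacency
   relation e : rel T (assumed symmetric and irreflexive for the graphs used). *)
Section Graph.
Variables (T : finType) (e : rel T).

Definition is_edge (E : {set T}) : Prop := exists x y, e x y /\ E = [set x; y].

(* A walk is x :: p with consecutive vertices adjacent (path e x p); its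
   length is size p.  A geodesic is a walk that is no longer than any walk
   with the same endpoints (i.e. a shortest path). *)
Definition geodesic (x : T) (p : seq T) : Prop :=
  path e x p /\
  forall q : seq T, path e x q -> last x q = last x p -> size p <= size q.

Definition walk_edges (x : T) (p : seq T) : {set {set T}} :=
  [set E in [seq [set ab.1; ab.2] | ab <- zip (x :: p) p]].

Definition edge_gp_set (S : {set {set T}}) : Prop :=
  (forall E, E \in S -> is_edge E) /\
  forall x p, geodesic x p -> #|S :&: walk_edges x p| < 3.

Definition gpe : nat :=
  \max_(S : {set {set T}} | `[< edge_gp_set S >]) #|S|.

End Graph.

Definition hcube_adj (r : nat) : rel {ffun 'I_r -> bool} :=
  fun x y => #|[set i | x i != y i]| == 1.

(* A walk in Q_r is at least as long as the Hamming distance of its ends, and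
   toggling the differing coordinates one by one attains it; hence a geodesic
   crosses every coordinate direction at most once.
   Upper bound: for each vertex x, flipping the coordinates of x in the order
   0, ..., r-1 gives a geodesic from x to its antipode.  The edge
   {a, a + e_i} lies on two of these 2^r staircases (those starting from a
   and from a + e_i with their first i coordinates flipped), while a general
   position set meets each staircase in at most two edges; double counting
   gives 2 |S| <= 2 * 2^r.
   Lower bound: fix coordinates i0 <> i1 and pair each vertex x with its
   neighbour across i0 if x_i0 = x_i1, across i1 otherwise.  This gives 2^r
   distinct edges, each crossing direction i0 or i1, so a geodesic contains
   at most two of them. *)

From mathcomp Require Import all_boot boolp.
Set Implicit Arguments. Unset Strict Implicit. Unset Printing Implicit Defensive.

Lemma double_counting (X Y : finType) (S : {set Y}) (W : X -> {set Y}) (c d : nat) :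
  (forall y, y \in S -> c <= #|[set x | y \in W x]|) ->
  (forall x, #|S :&: W x| <= d) -> c * #|S| <= d * #|X|.
Proof.
move=> covered meets.
have card_meet x : #|S :&: W x| = \sum_(y in S) (y \in W x : nat).
  rewrite -sum1_card big_mkcond [RHS]big_mkcond; apply: eq_bigr => y _.
  by rewrite inE; case: (y \in S); case: (y \in W x).
have card_cover y : #|[set x | y \in W x]| = \sum_x (y \in W x : nat).
  by rewrite -sum1dep_card big_mkcond; apply: eq_bigr => x _; case: (y \in W x).
apply: leq_trans (_ : \sum_(y in S) #|[set x | y \in W x]| <= _).
  by rewrite mulnC -sum_nat_const; exact: leq_sum.
under eq_bigr do rewrite card_cover.
rewrite exchange_big /= mulnC -sum_nat_const.
by apply: leq_sum => x _; rewrite -card_meet.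
Qed.

Lemma path_map_iota (T : Type) (e : rel T) (f : nat -> T) m n :
  (forall k, k < m + n -> e (f k) (f k.+1)) -> path e (f m) [seq f k | k <- iota m.+1 n].
Proof.
elim: n m => [|n IHn] m step //=.
rewrite step ?addnS ?ltnS ?leq_addr //=; apply: IHn => k; rewrite addSnnS; exact: step.
Qed.

Lemma zip_map_iota (T : Type) (f : nat -> T) m n :
  zip [seq f k | k <- iota m n.+1] [seq f k | k <- iota m.+1 n] =
  [seq (f k, f k.+1) | k <- iota m n].
Proof. by elim: n m => [|n IHn] m //=; rewrite -IHn. Qed.

Lemma last_iota m n : last m (iota m.+1 n) = m + n.
Proof. by elim: n m => [|n IHn] m /=; rewrite ?addn0 // IHn addnS. Qed.

Section Hypercube.
Variable r : nat.
Local Notation V := {ffun 'I_r -> bool}.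
Local Notation adj := (@hcube_adj r).

Definition hdist (x y : V) : nat := #|[set i | x i != y i]|.

Lemma hdist_sum x y : hdist x y = \sum_i (x i != y i : nat).
Proof.
by rewrite /hdist -sum1dep_card big_mkcond; apply: eq_bigr => i _; case: (x i != y i).
Qed.

Lemma hdist_triangle x y z : hdist x z <= hdist x y + hdist y z.
Proof.
apply: leq_trans (leq_card_setU _ _); apply: subset_leq_card; apply/subsetP => i.
by rewrite !inE; case: (x i); case: (y i); case: (z i).
Qed.

Lemma hdist_le_size_path x p : path adj x p -> hdist x (last x p) <= size p.
Proof.
elim: p x => [|y p IHp] x /=.
  by move=> _; rewrite leqn0 /hdist cards_eq0; apply/eqP/setP => i; rewrite !inE eqxx.
case/andP => /eqP xy /IHp yp; apply: leq_trans (hdist_triangle x y _) _.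
by rewrite /hdist xy add1n ltnS.
Qed.

Definition toggle (x : V) (i : 'I_r) : V := [ffun j => x j (+) (j == i)].

Lemma toggleK x i : toggle (toggle x i) i = x.
Proof. by apply/ffunP => j; rewrite !ffunE -addbA addbb addbF. Qed.

Lemma toggle_inj x : injective (toggle x).
Proof.
move=> i j /ffunP /(_ i); rewrite !ffunE eqxx => /addbI.
by case: eqP.
Qed.

Lemma toggle_neq x i : toggle x i != x.
Proof. by apply/eqP => /ffunP /(_ i); rewrite ffunE eqxx; case: (x i). Qed.

Lemma adj_toggle x i : adj x (toggle x i).
Proof.
rewrite /hcube_adj (_ : [set j | _] = [set i]) ?cards1 //.
by apply/setP => j; rewrite !inE ffunE; case: (x j); case: (j == i).
Qed.

Lemma adj_toggleP x y : adj x y -> exists i, y = toggle x i.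
Proof.
case/cards1P => i xy; exists i; apply/ffunP => j.
move/setP/(_ j): xy; rewrite !inE ffunE => <-.
by case: (x j); case: (y j).
Qed.

Fixpoint toggle_walk (x : V) (s : seq 'I_r) : seq V :=
  if s is i :: s' then toggle x i :: toggle_walk (toggle x i) s' else [::].

Lemma toggle_walk_path x s : path adj x (toggle_walk x s).
Proof. by elim: s x => [|i s IHs] x //=; rewrite adj_toggle IHs. Qed.

Lemma size_toggle_walk x s : size (toggle_walk x s) = size s.
Proof. by elim: s x => [|i s IHs] x //=; rewrite IHs. Qed.

Lemma last_toggle_walk x s :
  uniq s -> last x (toggle_walk x s) = [ffun j => x j (+) (j \in s)].
Proof.
elim: s x => [|i s IHs] x /=.
  by move=> _; apply/ffunP => j; rewrite ffunE addbF.
case/andP => i_s uniq_s; rewrite IHs //; apply/ffunP => j; rewrite !ffunE inE.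
by case: eqP => [->|_]; rewrite ?(negbTE i_s) addbF ?addbT.
Qed.

Lemma geodesic_hcubeP x p :
  geodesic adj x p <-> path adj x p /\ size p <= hdist x (last x p).
Proof.
split=> [[xp shortest] | [xp short]]; last first.
  by split=> // q xq qp; rewrite (leq_trans short) // -qp hdist_le_size_path.
split=> //; set y := last x p; set s := enum [set i | x i != y i].
have <- : size (toggle_walk x s) = hdist x y by rewrite size_toggle_walk -cardE.
apply: shortest (toggle_walk_path x s) _.
rewrite last_toggle_walk ?enum_uniq //; apply/ffunP => j.
by rewrite ffunE mem_enum inE; case: (x j); case: (y j).
Qed.

Definition crossings (i : 'I_r) (x : V) (p : seq V) : nat :=
  count (fun st : V * V => st.1 i != st.2 i) (zip (x :: p) p).

Lemma diff_le_crossings i (x : V) p : (x i != last x p i : nat) <= crossings i x p.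
Proof.
elim: p x => [|y p IHp] x /=; first by rewrite eqxx.
apply: leq_trans (leq_add (leqnn (x i != y i : nat)) (IHp y)).
by case: (x i); case: (y i); case: (last y p i).
Qed.

Lemma size_crossings x p : path adj x p -> size p = \sum_i crossings i x p.
Proof.
elim: p x => [|y p IHp] x /=; first by rewrite big1.
by case/andP => /eqP xy /IHp ->; rewrite big_split /= -hdist_sum /hdist xy add1n.
Qed.

Lemma geodesic_crossings x p i :
  geodesic adj x p -> crossings i x p = (x i != last x p i).
Proof.
case/geodesic_hcubeP => xp; rewrite hdist_sum (size_crossings xp) => short.
pose flipped j : nat := x j != last x p j.
have /leqif_sum cmp : forall j, predT j ->
    flipped j <= crossings j x p ?= iff (flipped j == crossings j x p).
  by move=> j _; apply/leqif_eq/diff_le_crossings.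
have /forall_inP/(_ i isT)/eqP <- // :
    [forall (j | predT j), flipped j == crossings j x p].
by rewrite -(eq_leqif cmp) eqn_leq short cmp.
Qed.

Definition cuts (i : 'I_r) (E : {set V}) : bool :=
  [exists a in E, exists b in E, a i != b i].

Lemma cuts_set2 i a b : cuts i [set a; b] = (a i != b i).
Proof.
apply/existsP/idP => [[a' /andP [a'ab /existsP [b' /andP [b'ab ne]]]] | ne].
  move: a'ab b'ab ne; rewrite !in_set2 => /orP [] /eqP -> /orP [] /eqP ->;
  by rewrite ?eqxx // eq_sym.
by exists a; rewrite set21 /=; apply/existsP; exists b; rewrite set22.
Qed.

Lemma card_cut_walk_edges i x p :
  #|walk_edges x p :&: [set E | cuts i E]| <= crossings i x p.
Proof.
rewrite /crossings -size_filter -(size_map (fun st : V * V => [set st.1; st.2])).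
apply: leq_trans (card_size _); apply: subset_leq_card; apply/subsetP => E.
rewrite !inE => /andP [/mapP [st st_p ->]].
by rewrite cuts_set2 => cut; apply/mapP; exists st; rewrite // mem_filter cut.
Qed.

Lemma geodesic_cut_edges i x p :
  geodesic adj x p -> #|walk_edges x p :&: [set E | cuts i E]| <= 1.
Proof.
move=> g; apply: leq_trans (card_cut_walk_edges i x p) _.
by rewrite geodesic_crossings // leq_b1.
Qed.

Lemma card_hcube : #|V| = 2 ^ r.
Proof. by rewrite card_ffun card_bool card_ord. Qed.

Definition stair (x : V) (k : nat) : V := [ffun j : 'I_r => x j (+) (j < k)].

Lemma stair0 x : stair x 0 = x.
Proof. by apply/ffunP => j; rewrite ffunE addbF. Qed.

Lemma stairK x k : stair (stair x k) k = x.
Proof. by apply/ffunP => j; rewrite !ffunE -addbA addbb addbF. Qed.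

Lemma stairS x (i : 'I_r) : stair x i.+1 = toggle (stair x i) i.
Proof.
apply/ffunP => j; rewrite !ffunE -addbA ltnS -val_eqE /=.
by case: ltngtP.
Qed.

Definition stairs (x : V) : seq V := [seq stair x k | k <- iota 1 r].

Lemma stairs_geodesic x : geodesic adj x (stairs x).
Proof.
apply/geodesic_hcubeP; rewrite -[X in path _ X _]stair0 -[X in last X _]stair0.
split.
  by apply: path_map_iota => k k_r; rewrite (stairS x (Ordinal k_r)) adj_toggle.
rewrite size_map size_iota last_map last_iota /hdist.
rewrite (_ : [set i | _] = setT) ?cardsT ?card_ord //.
by apply/setP => j; rewrite !inE !ffunE ltn_ord; case: (x j).
Qed.

Lemma stairs_edge x (i : 'I_r) :
  [set stair x i; stair x i.+1] \in walk_edges x (stairs x).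
Proof.
rewrite /walk_edges inE -[X in zip (X :: _) _]stair0.
have -> : stair x 0 :: stairs x = [seq stair x k | k <- iota 0 r.+1] by [].
rewrite zip_map_iota; apply/mapP; exists (stair x i, stair x i.+1) => //.
by apply/mapP; exists (val i); rewrite // mem_iota /=.
Qed.

Lemma edge_on_two_stairs E :
  is_edge adj E -> 2 <= #|[set x | E \in walk_edges x (stairs x)]|.
Proof.
case=> a [b [ab ->]]; have [i ->] := adj_toggleP ab.
have on_stairs c : [set c; toggle c i] \in walk_edges (stair c i) (stairs (stair c i)).
  by have := stairs_edge (stair c i) i; rewrite stairS !stairK.
apply: leq_trans (_ : #|[set stair a i; stair (toggle a i) i]| <= _).
  rewrite cards2; case: eqP => // /(congr1 (stair^~ i)).
  by rewrite !stairK => /eqP; rewrite eq_sym (negbTE (toggle_neq a i)).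
apply: subset_leq_card; apply/subsetP => x; rewrite in_set2 in_set => /orP [] /eqP ->.
  exact: on_stairs.
by have := on_stairs (toggle a i); rewrite toggleK setUC.
Qed.

Lemma card_edge_gp_le S : edge_gp_set adj S -> #|S| <= 2 ^ r.
Proof.
case=> edges short.
have := @double_counting _ _ S (fun x => walk_edges x (stairs x)) 2 2.
rewrite card_hcube leq_pmul2l //; apply.
  by move=> E /edges; apply: edge_on_two_stairs.
by move=> x; rewrite -ltnS; apply: short (stairs_geodesic x).
Qed.

Section PivotEdges.
Variables i0 i1 : 'I_r.
Hypothesis i01 : i0 != i1.

Definition pivot (x : V) : 'I_r := if x i0 == x i1 then i0 else i1.

Definition pivot_edge (x : V) : {set V} := [set x; toggle x (pivot x)].

Definition pivot_edges : {set {set V}} := pivot_edge @: setT.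

Lemma pivot_toggle x : pivot (toggle x (pivot x)) != pivot x.
Proof.
have i10 : i1 != i0 by rewrite eq_sym.
rewrite /pivot; case e: (x i0 == x i1);
  rewrite !ffunE eqxx ?(negbTE i01) ?(negbTE i10) /=;
  by move: e; case: (x i0); case: (x i1).
Qed.

Lemma pivot_edge_inj : injective pivot_edge.
Proof.
move=> x y exy.
have : y \in pivot_edge x by rewrite exy set21.
rewrite in_set2 => /orP [/eqP // | /eqP yx].
have : x \in pivot_edge y by rewrite -exy set21.
rewrite in_set2 => /orP [/eqP // | /eqP xy].
have /toggle_inj same_pivot : toggle y (pivot y) = toggle y (pivot x).
  by rewrite -xy yx toggleK.
by move: (pivot_toggle x); rewrite -yx same_pivot eqxx.
Qed.

Lemma card_pivot_edges : #|pivot_edges| = 2 ^ r.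
Proof. by rewrite card_imset ?cardsT ?card_hcube //; apply: pivot_edge_inj. Qed.

Lemma pivot_edge_cuts x : cuts i0 (pivot_edge x) || cuts i1 (pivot_edge x).
Proof.
have : cuts (pivot x) (pivot_edge x) by rewrite cuts_set2 ffunE eqxx; case: (x _).
by rewrite /pivot; case: ifP => _ ->; rewrite ?orbT.
Qed.

Lemma edge_gp_pivot_edges : edge_gp_set adj pivot_edges.
Proof.
split=> [E /imsetP [x _ ->] | x p g].
  by exists x, (toggle x (pivot x)); rewrite adj_toggle.
set W := walk_edges x p.
apply: (@leq_ltn_trans #|W :&: [set E | cuts i0 E] :|: W :&: [set E | cuts i1 E]|).
  apply: subset_leq_card; apply/subsetP => E; rewrite !inE => /andP [/imsetP [y _ ->] ->].
  by rewrite !andTb pivot_edge_cuts.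
apply: leq_ltn_trans (leq_card_setU _ _) _.
by rewrite ltnS (@leq_add _ _ 1 1) ?geodesic_cut_edges.
Qed.

End PivotEdges.

End Hypercube.

Theorem theorem3p2 (r : nat) : 2 <= r -> gpe (@hcube_adj r) = 2 ^ r.
Proof.
move=> r2; apply/eqP; rewrite eqn_leq; apply/andP; split.
  by apply/bigmax_leqP => S /asboolP; apply: card_edge_gp_le.
pose i0 : 'I_r := Ordinal (ltnW r2); pose i1 : 'I_r := Ordinal r2.
have i01 : i0 != i1 by [].
rewrite -(card_pivot_edges i01) /gpe.
by apply: leq_bigmax_cond; apply/asboolP; apply: edge_gp_pivot_edges.
Qed.
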